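(* Let $K$ be a field, $A\subset K$ a finite set with $|A|=m$, $0\le p\le m$, and $X=\{x_1,\dots,x_{m-p}\}$ a set of indeterminates. Let $B\subset K$ be any finite set with $|B|\ge p$. Then in $K[X]$, $$\sum_{A'\subset A,\ |A'|=p}\mathcal{R}(A\setminus A',B)\frac{\mathcal{R}(X,A')}{\mathcal{R}(A\setminus A',A')}=\sum_{B'\subset B,\ |B'|=p}\mathcal{R}(A,B\setminus B')\frac{\mathcal{R}(X,B')}{\mathcal{R}(B',B\setminus B')}.$$
   Context: For finite sets $Y,Z$ of elements or indeterminates, $\mathcal{R}(Y,Z):=\prod_{y\in Y,z\in Z}(y-z)$, with $\mathcal{R}(Y,Z)=1$ if $Y$ or $Z$ is empty. *)

From HB Require Import structures.
From mathcomp Require Import all_boot all_algebra.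
From mathcomp Require Import finmap.
From mathcomp Require Import mpoly.
Set Implicit Arguments. Unset Strict Implicit. Unset Printing Implicit Defensive.
Import GRing.Theory.
Local Open Scope ring_scope.

Definition Rres (R : comNzRingType) (Y Z : seq R) : R :=
  \prod_(y <- Y) \prod_(z <- Z) (y - z).

Definition elems (K : choiceType) (A : {fset K}) (S : {set A}) : seq K :=
  [seq val x | x in S].

Definition Xvars (K : comNzRingType) (n : nat) : seq {mpoly K[n]} :=
  [seq 'X_i | i : 'I_n].

Definition cstP (K : comNzRingType) (n : nat) (s : seq K) : seq {mpoly K[n]} :=
  [seq c%:MP | c <- s].

(* Induction on the number of indeterminates, the coefficients being mapped
   into K[X] by a ring morphism.  As polynomials in one indeterminate x, both
   sides have degree at most p, and at x = a for a in A they both equal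
   R(a, B) times the two sides of the identity for A \ {a} with one
   indeterminate fewer: on the left the terms with a in A' vanish.  Hence they
   agree at m > p points.  With no indeterminate left (|A| = p) the left side
   is 1 and the right side is a sum of Lagrange weights
   R(A, C) / R(B \ C, C) over the (|B| - p)-subsets C of B, which is 1 by the
   same interpolation argument. *)

From HB Require Import structures.
From mathcomp Require Import all_boot all_algebra.
From mathcomp Require Import finmap.
From mathcomp Require Import mpoly.
From mathcomp Require Import zify ring.
Import GRing.Theory.
Local Open Scope ring_scope.

Set Implicit Arguments. Unset Strict Implicit. Unset Printing Implicit Defensive.

Lemma subset_eq_card (W : finType) (C D : {set W}) :
  (C \subset D) && (#|C| == #|D|) = (C == D).
Proof.
rewrite eqEcard; case: (boolP (C \subset D)) => //= CD.
by rewrite eqn_leq subset_leq_card.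
Qed.

Lemma setD1_setD (W : finType) (D C : {set W}) (b : W) :
  (D :\ b) :\: C = (D :\: C) :\ b.
Proof. by rewrite !setDDl setUC. Qed.

Lemma prod_sub_neq0 (R : idomainType) (I : finType) (h : I -> R) (C : {set I}) a :
  injective h -> a \notin C -> \prod_(c in C) (h a - h c) != 0.
Proof.
move=> h_inj Ca; apply/prodf_neq0 => c Cc; rewrite subr_eq0.
by apply: contraNneq Ca => /h_inj ->.
Qed.

Lemma divf_prod_setD1 (R : fieldType) (I : finType) (X : {set I}) (F : I -> R) x a :
  a \in X -> F a != 0 -> x / \prod_(i in X) F i * F a = x / \prod_(i in X :\ a) F i.
Proof. by move=> Xa Fa; rewrite (big_setD1 a Xa) invfM mulrAC -mulrA mulVKf. Qed.

Section SubsetPolynomial.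
Variables (S : idomainType) (T : finType) (g : T -> S).

Definition subset_poly (w : {set T} -> S) (D : {set T}) (k : nat) : {poly S} :=
  \sum_(C : {set T} | (C \subset D) && (#|C| == k))
     w C *: \prod_(c in C) ('X - (g c)%:P).

Lemma size_subset_poly w D k : (size (subset_poly w D k) <= k.+1)%N.
Proof.
rewrite /subset_poly; elim/big_rec: _ => [|C q /andP[_ /eqP kC] sz_q].
  by rewrite size_poly0.
apply: leq_trans (size_polyD _ _) _; rewrite geq_max sz_q andbT.
apply: leq_trans (size_scale_leq _ _) _.
rewrite -big_enum /= -(big_map g xpredT (fun x => 'X - x%:P)) size_prod_XsubC.
by rewrite size_map -cardE kC.
Qed.

Lemma horner_subset_poly w D k x :
  (subset_poly w D k).[x] =
  \sum_(C : {set T} | (C \subset D) && (#|C| == k)) w C * \prod_(c in C) (x - g c).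
Proof.
rewrite horner_sum; apply: eq_bigr => C _.
by rewrite hornerZ horner_prod; under eq_bigr do rewrite hornerXsubC.
Qed.

Lemma horner_subset_poly_node w (D : {set T}) k b : b \in D ->
  (subset_poly w D k).[g b] =
  \sum_(C : {set T} | (C \subset D :\ b) && (#|C| == k))
     w C * \prod_(c in C) (g b - g c).
Proof.
move=> Db; rewrite horner_subset_poly (bigID (fun C : {set T} => b \in C)) /= big1 ?add0r.
  by apply: eq_bigl => C; rewrite subsetD1 andbAC.
by move=> C /andP[_ Cb]; rewrite (big_setD1 b Cb) /= subrr mul0r mulr0.
Qed.

Lemma eq_poly_on_nodes (D : {set T}) (p q : {poly S}) : injective g ->
  (size p <= #|D|)%N -> (size q <= #|D|)%N ->
  (forall b, b \in D -> p.[g b] = q.[g b]) -> p = q.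
Proof.
move=> g_inj sz_p sz_q pq; apply/eqP; rewrite -subr_eq0; apply/eqP.
apply: (@roots_geq_poly_eq0 _ _ [seq g b | b in D]).
- apply/allP => _ /mapP[b Db ->]; rewrite mem_enum in Db.
  by rewrite /root hornerD hornerN pq // subrr.
- by rewrite map_inj_uniq ?enum_uniq.
rewrite size_map -cardE (leq_trans (size_polyD _ _)) //.
by rewrite size_polyN geq_max sz_p.
Qed.

End SubsetPolynomial.

Section LagrangeWeight.
Variables (K : fieldType) (U : finType) (f : U -> K).
Hypothesis f_inj : injective f.

Definition lagrange_weight (ys : seq K) (E C : {set U}) : K :=
  (\prod_(y <- ys) \prod_(c in C) (y - f c)) /
  \prod_(d in E :\: C) \prod_(c in C) (f d - f c).

Lemma lagrange_weight_setD1 ys (E C : {set U}) b : b \in E -> b \notin C ->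
  lagrange_weight ys E C * \prod_(c in C) (f b - f c) = lagrange_weight ys (E :\ b) C.
Proof.
move=> Eb Cb; rewrite /lagrange_weight setD1_setD divf_prod_setD1 ?prod_sub_neq0 //.
by rewrite inE Cb.
Qed.

Lemma sum_lagrange_weight ys (E : {set U}) k : (size ys + k)%N = #|E| ->
  \sum_(C : {set U} | (C \subset E) && (#|C| == k)) lagrange_weight ys E C = 1.
Proof.
elim: ys E => [|y ys IH] E /= cardE.
  rewrite add0n in cardE; rewrite (eq_bigl (pred1 E)) => [|C]; last first.
    by rewrite /= -subset_eq_card cardE.
  by rewrite big_pred1_eq /lagrange_weight big_nil setDv big_set0 divr1.
pose q := subset_poly f (lagrange_weight ys E) E k.
have q_eq1 : q = 1.
  apply: (eq_poly_on_nodes f_inj (D := E)).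
  - by rewrite -cardE (leq_trans (size_subset_poly _ _ _ _)) // addSn ltnS leq_addl.
  - by rewrite size_poly1 -cardE addSn.
  move=> b Eb; rewrite horner_subset_poly_node // hornerC -[RHS](IH (E :\ b)); last first.
    by move: cardE; rewrite (cardsD1 b E) Eb addSn => -[].
  by apply: eq_bigr => C /andP[/subsetD1P[_ Cb] _]; apply: lagrange_weight_setD1.
have := congr1 (horner^~ y) q_eq1; rewrite hornerC horner_subset_poly => <-.
by apply: eq_bigr => C _; rewrite /lagrange_weight big_cons [RHS]mulrC mulrA.
Qed.

End LagrangeWeight.

Section Exchange.
Variables (K : fieldType) (S : idomainType) (iota : {rmorphism K -> S}).
Variables (T U : finType) (e : T -> K) (f : U -> K).
Hypotheses (e_inj : injective e) (f_inj : injective f).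
Variable p : nat.
Hypothesis p_le_U : (p <= #|U|)%N.

(* The coefficients of R(X, A') and R(X, B') in the statement, for A = e(D)
   and B = f(U). *)
Definition coefA (D A' : {set T}) : K :=
  (\prod_(d in D :\: A') \prod_(b in [set: U]) (e d - f b)) /
  \prod_(d in D :\: A') \prod_(a in A') (e d - e a).

Definition coefB (D : {set T}) (B' : {set U}) : K :=
  (\prod_(d in D) \prod_(b in ~: B') (e d - f b)) /
  \prod_(c in B') \prod_(b in ~: B') (f c - f b).

Lemma coefA_setD1 (D A' : {set T}) a : a \in D -> a \notin A' ->
  coefA D A' * \prod_(c in A') (e a - e c) =
  \prod_(b in [set: U]) (e a - f b) * coefA (D :\ a) A'.
Proof.
move=> Da A'a; have DA'a : a \in D :\: A' by rewrite inE A'a.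
rewrite /coefA setD1_setD divf_prod_setD1 ?prod_sub_neq0 //.
by rewrite (big_setD1 a DA'a) /= mulrA.
Qed.

Lemma coefB_setD1 (D : {set T}) (B' : {set U}) a : a \in D ->
  coefB D B' * \prod_(b in B') (e a - f b) =
  \prod_(b in [set: U]) (e a - f b) * coefB (D :\ a) B'.
Proof.
move=> Da; rewrite /coefB (big_setD1 a Da) /=.
rewrite [\prod_(b in [set: U]) _](big_setID B') /= setTI setTD.
by ring.
Qed.

Lemma sum_coefB (D : {set T}) : #|D| = p ->
  \sum_(B' : {set U} | #|B'| == p) coefB D B' = 1.
Proof.
move=> cardD.
have := sum_lagrange_weight f_inj (ys := [seq e d | d in D]) (E := [set: U]) (k := #|U| - p).
rewrite size_map -cardE cardD cardsT subnKC // => /(_ erefl) <-.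
rewrite (reindex_inj (@setC_inj U)) /=; apply: eq_big => [B'|B' _].
  by have := p_le_U; rewrite subsetT -(cardsC B') => ?; apply/eqP/eqP; lia.
by rewrite /coefB /lagrange_weight setCK setTD big_map big_enum.
Qed.

Definition sumA (xs : seq S) (D : {set T}) : S :=
  \sum_(A' : {set T} | (A' \subset D) && (#|A'| == p))
     iota (coefA D A') * \prod_(x <- xs) \prod_(a in A') (x - iota (e a)).

Definition sumB (xs : seq S) (D : {set T}) : S :=
  \sum_(B' : {set U} | #|B'| == p)
     iota (coefB D B') * \prod_(x <- xs) \prod_(b in B') (x - iota (f b)).

Definition polyA (xs : seq S) (D : {set T}) : {poly S} :=
  subset_poly (iota \o e)
    (fun A' => iota (coefA D A') * \prod_(x <- xs) \prod_(a in A') (x - iota (e a))) D p.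

Definition polyB (xs : seq S) (D : {set T}) : {poly S} :=
  subset_poly (iota \o f)
    (fun B' => iota (coefB D B') * \prod_(x <- xs) \prod_(b in B') (x - iota (f b)))
    [set: U] p.

Lemma sumA_nil (D : {set T}) : #|D| = p -> sumA [::] D = 1.
Proof.
move=> cardD; rewrite /sumA (eq_bigl (pred1 D)) => [|A']; last first.
  by rewrite /= -subset_eq_card cardD.
by rewrite big_pred1_eq /coefA setDv !big_set0 divr1 rmorph1 big_nil mulr1.
Qed.

Lemma sumB_nil (D : {set T}) : #|D| = p -> sumB [::] D = 1.
Proof.
move=> cardD; rewrite /sumB; under eq_bigr do rewrite big_nil mulr1.
by rewrite -rmorph_sum sum_coefB ?rmorph1.
Qed.

Lemma horner_polyA xs D y : (polyA xs D).[y] = sumA (y :: xs) D.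
Proof.
rewrite horner_subset_poly; apply: eq_bigr => A' _.
by rewrite big_cons mulrA mulrAC.
Qed.

Lemma horner_polyB xs D y : (polyB xs D).[y] = sumB (y :: xs) D.
Proof.
rewrite horner_subset_poly; apply: eq_big => [B'|B' _]; first by rewrite subsetT.
by rewrite big_cons mulrA mulrAC.
Qed.

Lemma horner_polyA_node xs (D : {set T}) a : a \in D ->
  (polyA xs D).[iota (e a)] = iota (\prod_(b in [set: U]) (e a - f b)) * sumA xs (D :\ a).
Proof.
move=> Da; rewrite [LHS](horner_subset_poly_node _ _ _ Da) mulr_sumr.
apply: eq_bigr => A' /andP[/subsetD1P[_ A'a] _]; rewrite /= mulrAC.
under eq_bigr do rewrite -rmorphB.
by rewrite -rmorph_prod -rmorphM coefA_setD1 // rmorphM mulrA.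
Qed.

Lemma horner_polyB_node xs (D : {set T}) a : a \in D ->
  (polyB xs D).[iota (e a)] = iota (\prod_(b in [set: U]) (e a - f b)) * sumB xs (D :\ a).
Proof.
move=> Da; rewrite horner_subset_poly mulr_sumr.
apply: eq_big => [B'|B' _]; first by rewrite subsetT.
rewrite /= mulrAC; under eq_bigr do rewrite -rmorphB.
by rewrite -rmorph_prod -rmorphM coefB_setD1 // rmorphM mulrA.
Qed.

Lemma subset_sum_exchange xs (D : {set T}) : (size xs + p)%N = #|D| ->
  sumA xs D = sumB xs D.
Proof.
elim: xs D => [|x xs IH] D /= cardD.
  by rewrite sumA_nil ?sumB_nil // -cardD.
have p_lt_D : (p < #|D|)%N by rewrite -cardD addSn ltnS leq_addl.
rewrite -horner_polyA -horner_polyB; congr (_.[x]).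
apply: (eq_poly_on_nodes (g := iota \o e) (D := D)) => [a b /fmorph_inj /e_inj //|||a Da].
1,2: exact: leq_trans (size_subset_poly _ _ _ _) p_lt_D.
rewrite /= horner_polyA_node // horner_polyB_node // IH //.
by move: cardD; rewrite (cardsD1 a D) Da addSn => -[].
Qed.

End Exchange.

Lemma Rres_seq_enum (R : comNzRingType) (I : finType) (xs : seq R) (h : I -> R)
    (X : {set I}) :
  Rres xs [seq h a | a in X] = \prod_(x <- xs) \prod_(a in X) (x - h a).
Proof. by apply: eq_bigr => x _; rewrite big_map big_enum. Qed.

Lemma Rres_enum (R : comNzRingType) (I J : finType) (g : I -> R) (h : J -> R)
    (X : {set I}) (Y : {set J}) :
  Rres [seq g a | a in X] [seq h b | b in Y] = \prod_(a in X) \prod_(b in Y) (g a - h b).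
Proof. by rewrite Rres_seq_enum big_map big_enum. Qed.

Theorem lemma3p1 (K : fieldType) (A B : {fset K}) (m p : nat)
  (hA : #|` A| = m) (hp : (p <= m)%N) (hB : (p <= #|` B|)%N) :
  \sum_(A' : {set A} | #|A'| == p)
     (Rres (elems (~: A')) (elems [set: B]) / Rres (elems (~: A')) (elems A'))
       *: Rres (Xvars K (m - p)) (cstP (m - p) (elems A'))
  =
  \sum_(B' : {set B} | #|B'| == p)
     (Rres (elems [set: A]) (elems (~: B')) / Rres (elems B') (elems (~: B')))
       *: Rres (Xvars K (m - p)) (cstP (m - p) (elems B')).
Proof.
have p_le_B : (p <= #|{: B}|)%N by rewrite -cardfE.
have size_X : (size (Xvars K (m - p)) + p)%N = #|[set: A]|.
  by rewrite size_map -cardE card_ord cardsT -cardfE hA subnK.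
have := subset_sum_exchange (@mpolyC (m - p) K : {rmorphism _ -> _}) val_inj val_inj p_le_B size_X.
rewrite /sumA /sumB /elems /cstP /Xvars; under eq_bigl do rewrite subsetT.
move=> exchange; apply: etrans (etrans _ exchange) _;
  by apply: eq_bigr => C _; rewrite !Rres_enum -map_comp Rres_seq_enum -mul_mpolyC /coefA /coefB ?setTD.
Qed.
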